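(* Let $V\subseteq\mathcal V$ be finite, $\mathcal E,\mathcal F\in\mathit{DProg}(V)$, and $V'\subseteq\mathcal V$ with $|V'|=|V|$ and $V\cap V'=\emptyset$. Then (1) $\mathcal E\le_T^e\mathcal F$ iff $\mathcal F\models_{tot}(\mathcal E^\dagger(\Omega_{V,V'}),\Omega_{V,V'})$; (2) $\mathcal E\le_P^e\mathcal F$ iff $\mathcal F\models_{par}(I-\mathcal E^\dagger(\Omega_{V,V'}),\,I-\Omega_{V,V'})$.
   Context: $\mathcal V$ is a countably infinite set of qubit variables; $\mathcal H_V=\bigotimes_{q\in V}\mathcal H_q$ for finite $V$. $\mathcal D(\mathcal H)$: partial density operators; $\mathcal P(\mathcal H)$: effects; $\mathit{DProg}(V)$: completely positive trace-nonincreasing super-operators on $\mathcal L(\mathcal H_V)$. $\mathcal E^\dagger$ is the adjoint of $\mathcal E$: ${\rm tr}(\mathcal E(A)B)={\rm tr}(A\mathcal E^\dagger(B))$ for all $A,B$. Operators/super-operators on subsystems are implicitly extended by tensoring with identities. With $d=2^{|V|}$ and orthonormal bases $\{|i\rangle_V\}$, $\{|i\rangle_{V'}\}$, $\Omega_{V,V'}=|\omega\rangle\langle\omega|$ where $|\omega\rangle=\frac1{\sqrt d}\sum_{i=0}^{d-1}|i\rangle_V|i\rangle_{V'}$, and $I$ is the identity on $\mathcal H_V\otimes\mathcal H_{V'}$. (In the paper's notation, $\mathcal E^\dagger(N)=wp.\mathcal E.N$ and $I-\mathcal E^\dagger(I-N)=wlp.\mathcal E.N$, so the specification in (2) is $(wlp.\mathcal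 E.(I-\Omega),I-\Omega)$.) For finite $W$ and $M,N\in\mathcal P(\mathcal H_W)$, $\mathcal E\models_{tot}(M,N)$ iff for all finite $X\supseteq V\cup W$ and $\rho\in\mathcal D(\mathcal H_X)$, ${\rm tr}(M\rho)\le{\rm tr}(N\mathcal E(\rho))$; $\mathcal E\models_{par}(M,N)$ iff for all such $X,\rho$, ${\rm tr}(M\rho)\le{\rm tr}(N\mathcal E(\rho))+{\rm tr}(\rho)-{\rm tr}(\mathcal E(\rho))$. $\mathcal E\le_T^e\mathcal F$ (resp. $\le_P^e$) iff for every finite $W$ and $M,N\in\mathcal P(\mathcal H_W)$, $\mathcal E\models_{tot}(M,N)\Rightarrow\mathcal F\models_{tot}(M,N)$ (resp. with $\models_{par}$). *)

From HB Require Import structures.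
From mathcomp Require Import all_boot all_order all_algebra finmap.
From mathcomp Require Import complex.
From mathcomp Require Import Rstruct.
Set Implicit Arguments.
Unset Strict Implicit.
Unset Printing Implicit Defensive.
Import Order.TTheory GRing.Theory Num.Theory.
Local Open Scope ring_scope.

Definition C : numClosedFieldType := (Rdefinitions.R)[i].

(** Qubit variables: the countably infinite set nat.  A finite set of
    variables is a [{fset nat}].  The computational basis of
    H_X = ⊗_{q ∈ X} H_q (H_q = C^2) is indexed by assignments X -> bool. *)
Definition basis (X : {fset nat}) : finType := {ffun X -> bool}.

(** Linear operators on H_X, as matrices in the computational basis. *)
Definition op (X : {fset nat}) := basis X -> basis X -> C.

(** Restriction of a basis assignment on X to the variables of W
    (variables of W outside X get the dummy value false; only used with W ⊆ X). *)
Definition restr (X W : {fset nat}) (s : basis X) : basis W :=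
  [ffun w : W => if (insub (val w) : option X) is Some x then s x else false].

Definition glue (V X : {fset nat}) (u : basis V) (s : basis X) : basis X :=
  [ffun x : X => if (insub (val x) : option V) is Some v then u v else s x].

Definition optr (X : {fset nat}) (A : op X) : C := \sum_i A i i.
Definition opmul (X : {fset nat}) (A B : op X) : op X :=
  fun i j => \sum_k A i k * B k j.
Definition opone (X : {fset nat}) : op X := fun i j => (i == j)%:R.
Definition opsub (X : {fset nat}) (A B : op X) : op X := fun i j => A i j - B i j.
Definition opunit (X : {fset nat}) (v u : basis X) : op X :=
  fun i j => ((i == v) && (j == u))%:R.

Definition psd (X : {fset nat}) (A : op X) : Prop :=
  forall x : basis X -> C, 0 <= \sum_i \sum_j (x i)^* * A i j * x j.

Definition pdo (X : {fset nat}) (rho : op X) : Prop := psd rho /\ optr rho <= 1.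
Definition effect (X : {fset nat}) (M : op X) : Prop :=
  psd M /\ psd (opsub (@opone X) M).

(** Extension of an operator M on H_W to H_X (W ⊆ X): M ⊗ I_{X \ W}. *)
Definition extop (W X : {fset nat}) (M : op W) : op X :=
  fun s t => M (restr W s) (restr W t) *
             ([forall x : X, (val x \notin W) ==> (s x == t x)])%:R.

Definition super (V : {fset nat}) := op V -> op V.

(** Extension of a super-operator E on L(H_V) to L(H_X) (V ⊆ X): E ⊗ id_{X \ V}.
    ((E ⊗ id)(rho))(s,t) = E(rho_{s,t})(s|_V, t|_V) where rho_{s,t} is the
    block of rho with the X \ V components fixed to those of s and t. *)
Definition ext (V X : {fset nat}) (E : super V) (rho : op X) : op X :=
  fun s t => E (fun u v => rho (glue u s) (glue v t)) (restr V s) (restr V t).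

Definition linear_super (V : {fset nat}) (E : super V) : Prop :=
  forall (a : C) (A B : op V) (u v : basis V),
    E (fun i j => a * A i j + B i j) u v = a * E A u v + E B u v.

(** DProg(V): completely positive, trace-nonincreasing super-operators on L(H_V).
    Complete positivity: E ⊗ id is positive for every (qubit) ancilla X \ V. *)
Definition DProg (V : {fset nat}) (E : super V) : Prop :=
  [/\ linear_super E,
      (forall X : {fset nat}, (V `<=` X)%fset ->
         forall rho : op X, psd rho -> psd (ext E rho))
    & (forall rho : op V, psd rho -> optr (E rho) <= optr rho)].

(** The adjoint E^† : tr(E(A) B) = tr(A E^†(B)); concretely
    E^†(B)(u,v) = tr(E(|v><u|) B). *)
Definition adjoint (V : {fset nat}) (E : super V) : super V :=
  fun B u v => optr (opmul (E (opunit v u)) B).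

Definition sat_tot (V : {fset nat}) (E : super V) (W : {fset nat}) (M N : op W) : Prop :=
  forall X : {fset nat}, (V `|` W `<=` X)%fset -> forall rho : op X, pdo rho ->
    optr (opmul (@extop W X M) rho) <= optr (opmul (@extop W X N) (ext E rho)).

Definition sat_par (V : {fset nat}) (E : super V) (W : {fset nat}) (M N : op W) : Prop :=
  forall X : {fset nat}, (V `|` W `<=` X)%fset -> forall rho : op X, pdo rho ->
    optr (opmul (@extop W X M) rho) <=
      optr (opmul (@extop W X N) (ext E rho)) + optr rho - optr (ext E rho).

Definition refT (V : {fset nat}) (E F : super V) : Prop :=
  forall (W : {fset nat}) (M N : op W), effect M -> effect N ->
    sat_tot E M N -> sat_tot F M N.

Definition refP (V : {fset nat}) (E F : super V) : Prop :=
  forall (W : {fset nat}) (M N : op W), effect M -> effect N ->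
    sat_par E M N -> sat_par F M N.

(** Orthonormal basis {|i>} of H_X indexed by a finite type I (of size dim H_X):
    b i is the coordinate vector of |i>. *)
Definition orthonormal_basis (I : finType) (X : {fset nat}) (b : I -> basis X -> C) : Prop :=
  forall i j : I, \sum_s (b i s)^* * b j s = (i == j)%:R.

(** |omega> = 1/sqrt d * sum_i |i>_V |i>_V', d = 2^|V|, with the two bases
    indexed by the same d-element index set (here basis V). *)
Definition omega (V V' : {fset nat}) (bV : basis V -> basis V -> C)
    (bV' : basis V -> basis V' -> C) (s : basis (V `|` V')%fset) : C :=
  (sqrtC ((2 ^ #|` V|)%N%:R))^-1 *
    \sum_(i : basis V) bV i (restr V s) * bV' i (restr V' s).

Definition Omega (V V' : {fset nat}) (bV : basis V -> basis V -> C)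
    (bV' : basis V -> basis V' -> C) : op (V `|` V')%fset :=
  fun s t => omega bV bV' s * (omega bV bV' t)^*.

(* For [Y = (E^dag (x) id)(Omega)], duality gives [tr(Y rho) = tr(Omega (E (x) id)(rho))],
   so [E] itself meets the specification [(Y, Omega)] (and its complement) with
   equality; this gives the forward implications.  Conversely, the value of
   [tr(Omega (E (x) id)(rho))] at the normalised rank-one state [rho = |w><w|] is a
   positive multiple of the Choi form of [E] at the partial overlap of [w] with the
   maximally entangled vector, and every argument of the Choi form arises this way.
   So the Omega-test compares the Choi forms of [E] and [F].  Finally, Gram
   decompositions of positive [N] and [rho] on any larger system write
   [tr(N (E (x) id)(rho))] as a sum of values of the Choi form of [E], so an
   inequality between Choi forms propagates to every total (resp., with [N]
   replaced by [I - N], partial) correctness specification. *)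

From HB Require Import structures.
From mathcomp Require Import all_boot all_order all_algebra finmap spectral.
From Stdlib Require Import FunctionalExtensionality.
From mathcomp Require Import ring.
Import Order.TTheory GRing.Theory Num.Theory.
Set Implicit Arguments.
Unset Strict Implicit.
Unset Printing Implicit Defensive.
Local Open Scope ring_scope.

Lemma funext2 (A B T : Type) (f g : A -> B -> T) : (forall a b, f a b = g a b) -> f = g.
Proof. by move=> fg; apply: functional_extensionality => a; apply: functional_extensionality. Qed.

(** * Positive semidefinite forms *)

Section HermitianForms.
Variable K : numClosedFieldType.
Implicit Types (I J : finType).

Lemma conjCM (x y : K) : (x * y)^* = x^* * y^*.
Proof. exact: rmorphM. Qed.

Lemma sum_delta_l I (i : I) (F : I -> K) : \sum_k (k == i)%:R * F k = F i.
Proof.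
rewrite (bigD1 i) //= big1 ?eqxx ?mul1r ?addr0 // => k /negbTE ->.
by rewrite mul0r.
Qed.

Lemma sum_delta_r I (i : I) (F : I -> K) : \sum_k F k * (i == k)%:R = F i.
Proof.
by rewrite -[RHS](sum_delta_l i); apply: eq_bigr => k _; rewrite mulrC eq_sym.
Qed.

Lemma sum_enum_rank I (g : 'I_#|I| -> K) :
  \sum_(a : I) g (enum_rank a) = \sum_(i : 'I_#|I|) g i.
Proof. by rewrite [RHS](reindex enum_rank) //; apply/onW_bij/enum_rank_bij. Qed.

Lemma sum_enum_val I (g : I -> K) :
  \sum_(i : 'I_#|I|) g (enum_val i) = \sum_(a : I) g a.
Proof.
by rewrite -sum_enum_rank; apply: eq_bigr => a _; rewrite enum_rankK.
Qed.

Lemma big3_rot I J (L : finType) (f : I -> J -> L -> K) :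
  \sum_i \sum_j \sum_l f i j l = \sum_l \sum_i \sum_j f i j l.
Proof. by under eq_bigr => i _ do rewrite exchange_big; rewrite exchange_big. Qed.

Definition qform I (A : I -> I -> K) (x : I -> K) : K :=
  \sum_i \sum_j (x i)^* * A i j * x j.

Definition psdq I (A : I -> I -> K) : Prop := forall x, 0 <= qform A x.

Lemma qform_pair I (A : I -> I -> K) i j (a b : K) :
  qform A (fun k => a * (k == i)%:R + b * (k == j)%:R) =
  a^* * a * A i i + a^* * b * A i j + b^* * a * A j i + b^* * b * A j j.
Proof.
have delta_r k c (F : I -> K) : \sum_l F l * (c * (l == k)%:R) = F k * c.
  rewrite -[RHS](sum_delta_r k (fun l => F l * c)).
  by apply: eq_bigr => l _; rewrite eq_sym; ring.
rewrite /qform.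
transitivity (\sum_k (a^* * (k == i)%:R + b^* * (k == j)%:R) *
                      (A k i * a + A k j * b)).
  apply: eq_bigr => k _; rewrite rmorphD !rmorphM /= !conjC_nat.
  under eq_bigr => l _ do rewrite -mulrA mulrDr.
  by rewrite -mulr_sumr big_split /= !delta_r.
under eq_bigr => k _ do rewrite mulrDl mulrC [X in _ + X]mulrC.
rewrite big_split /= !delta_r; ring.
Qed.

Lemma psdq_herm I (A : I -> I -> K) : psdq A -> forall i j, A j i = (A i j)^*.
Proof.
move=> psdA i j.
pose q a b := qform A (fun k => a * (k == i)%:R + b * (k == j)%:R).
have q_real a b : (q a b)^* = q a b by apply/conj_Creal/ger0_real/psdA.
have cross_real t : (t * A i j + t^* * A j i)^* = t * A i j + t^* * A j i.
  have -> : t * A i j + t^* * A j i = q 1 t - q 1 0 - q 0 t.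
    by rewrite /q !qform_pair rmorph0 rmorph1; ring.
  by rewrite !rmorphB /= !q_real.
have := cross_real 1; have := cross_real 'i.
rewrite conjCi rmorph1 !mul1r !rmorphD !rmorphM /=.
move=> re_i re_1; rewrite rmorphN /= !conjCi opprK in re_i.
have sqi : 'i * 'i + 1 = 0 :> K by rewrite -expr2 sqrCi addNr.
(* [re_1 + 'i re_i], using ['i^2 = -1] *)
have : 2 * (A j i - (A i j)^*) = 0.
  transitivity (A i j + A j i - ((A i j)^* + (A j i)^*)
     + 'i * ('i * A i j + - 'i * A j i - (- 'i * (A i j)^* + 'i * (A j i)^*))
     - ('i * 'i + 1) * (A i j - A j i + (A i j)^* - (A j i)^*)); first by ring.
  by rewrite re_1 re_i sqi !subrr; ring.
by move/eqP; rewrite mulf_eq0 pnatr_eq0 subr_eq0 => /eqP.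
Qed.

Lemma qform_rank1 I (w x : I -> K) :
  qform (fun a b => (w a)^* * w b) x = (\sum_j w j * x j) * (\sum_i w i * x i)^*.
Proof.
rewrite rmorph_sum mulr_sumr; apply: eq_bigr => i _.
by rewrite mulr_suml; apply: eq_bigr => j _; rewrite rmorphM /=; ring.
Qed.

Lemma psdq_rank1 I (w : I -> K) : psdq (fun a b => (w a)^* * w b).
Proof. by move=> x; rewrite qform_rank1 mul_conjC_ge0. Qed.

Lemma qform_outer I (y x : I -> K) :
  qform (fun a b => y a * (y b)^*) x = (\sum_j (y j)^* * x j) * (\sum_i (y i)^* * x i)^*.
Proof.
rewrite rmorph_sum mulr_sumr; apply: eq_bigr => i _.
by rewrite mulr_suml; apply: eq_bigr => j _; rewrite !rmorphM /= conjCK; ring.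
Qed.

Lemma psdq_outer I (y : I -> K) : psdq (fun a b => y a * (y b)^*).
Proof. by move=> x; rewrite qform_outer mul_conjC_ge0. Qed.

Local Open Scope sesquilinear_scope.

(* Spectral theorem for the Hermitian matrix of [A]: [A = P^t* diag(d) P] with
   [P] unitary; [d k >= 0] is the value of the form at the conjugated [k]-th
   row of [P]. *)
Lemma psdq_gram I (A : I -> I -> K) : psdq A ->
  exists w : 'I_#|I| -> I -> K, forall i j, A i j = \sum_k (w k i)^* * w k j.
Proof.
move=> psdA.
pose M : 'M[K]_#|I| := \matrix_(i, j) A (enum_val i) (enum_val j).
have AM a b : A a b = M (enum_rank a) (enum_rank b) by rewrite mxE !enum_rankK.
have hermM : M^t* = M by apply/matrixP => i j; rewrite !mxE -(psdq_herm psdA).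
have normalM : M \is normalmx by apply/normalmxP; rewrite hermM.
have /orthomx_spectralP := normalM.
set P := spectralmx M; set d := spectral_diag M.
have unitaryP : P \is unitarymx := spectral_unitarymx M.
rewrite invmx_unitary // => eM.
have ME i j : M i j = \sum_k (P k i)^* * d 0 k * P k j.
  by rewrite {1}eM mxE; apply: eq_bigr => k _; rewrite mul_mx_diag !mxE.
have P_rows k l : \sum_i P k i * (P l i)^* = (k == l)%:R.
  move/unitarymxP: unitaryP => /matrixP /(_ k l); rewrite !mxE => <-.
  by apply: eq_bigr => i _; rewrite !mxE.
have d_ge0 k : 0 <= d 0 k.
  have := psdA (fun a => (P k (enum_rank a))^*); rewrite /qform.
  under eq_bigr => a _ do under eq_bigr => b _ do rewrite conjCK AM.
  rewrite (sum_enum_rank (fun i => \sum_b P k i * M i (enum_rank b) * (P k (enum_rank b))^*)).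
  under eq_bigr => i _ do rewrite (sum_enum_rank (fun j => P k i * M i j * (P k j)^*)).
  suff -> : \sum_i \sum_j P k i * M i j * (P k j)^* = d 0 k by [].
  transitivity (\sum_l \sum_i \sum_j (P k i * (P l i)^*) * d 0 l * (P l j * (P k j)^*)).
    rewrite -big3_rot; apply: eq_bigr => i _; apply: eq_bigr => j _.
    by rewrite ME mulr_sumr mulr_suml; apply: eq_bigr => l _; ring.
  transitivity (\sum_l (k == l)%:R * d 0 l * (l == k)%:R).
    apply: eq_bigr => l _; rewrite -(P_rows k l) -(P_rows l k) !mulr_suml.
    by apply: eq_bigr => i _; rewrite mulr_sumr; apply: eq_bigr => j _; ring.
  by under eq_bigr => l _ do rewrite [l == k]eq_sym; rewrite sum_delta_r eqxx mul1r.
exists (fun k a => sqrtC (d 0 k) * P k (enum_rank a)) => a b.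
rewrite AM ME; apply: eq_bigr => k _.
rewrite rmorphM /= (conj_Creal (sqrtC_real (d_ge0 k))).
set s := sqrtC (d 0 k).
have <- : s * s = d 0 k by rewrite -expr2 sqrtCK.
ring.
Qed.

Lemma trace_mul_psdq_ge0 I (A B : I -> I -> K) : psdq A -> psdq B ->
  0 <= \sum_i \sum_k A i k * B k i.
Proof.
move=> /psdq_gram[w Aw] psdB.
suff -> : \sum_i \sum_k A i k * B k i = \sum_m qform B (fun t => (w m t)^*).
  by apply: sumr_ge0 => m _; apply: psdB.
transitivity (\sum_m \sum_i \sum_k (w m i)^* * w m k * B k i).
  rewrite -big3_rot; apply: eq_bigr => i _; apply: eq_bigr => k _.
  by rewrite Aw mulr_suml.
apply: eq_bigr => m _; rewrite exchange_big; apply: eq_bigr => k _.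
by apply: eq_bigr => i _; rewrite conjCK; ring.
Qed.

Lemma qform_trace I (A : I -> I -> K) x :
  qform A x = \sum_i \sum_k A i k * (x k * (x i)^*).
Proof. by apply: eq_bigr => i _; apply: eq_bigr => k _; ring. Qed.

Lemma qform_1_sub I (A : I -> I -> K) x :
  qform (fun a b => (a == b)%:R - A a b) x = \sum_i (x i)^* * x i - qform A x.
Proof.
rewrite /qform -sumrB; apply: eq_bigr => i _.
transitivity (\sum_j ((x i)^* * x j * (i == j)%:R - (x i)^* * A i j * x j)).
  by apply: eq_bigr => j _; ring.
by rewrite sumrB sum_delta_r.
Qed.

(* Cauchy-Schwarz: [|<om, x>|^2 <= |x|^2], via the norm of [x - <om, x> om] *)
Lemma psdq_1_sub_outer I (om : I -> K) : \sum_i om i * (om i)^* = 1 ->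
  psdq (fun a b => (a == b)%:R - om a * (om b)^*).
Proof.
move=> om_unit x; rewrite qform_1_sub qform_outer; set S := \sum_j (om j)^* * x j.
have Sc : S^* = \sum_i (x i)^* * om i.
  by rewrite rmorph_sum; apply: eq_bigr => i _; rewrite rmorphM /= conjCK mulrC.
have -> : \sum_i (x i)^* * x i - S * S^* =
          \sum_i (x i - S * om i)^* * (x i - S * om i).
  transitivity (\sum_i ((x i)^* * x i - S^* * ((om i)^* * x i) - S * ((x i)^* * om i)
                        + S * S^* * (om i * (om i)^*))).
    by rewrite big_split !sumrB /= -!mulr_sumr om_unit -Sc -/S; ring.
  by apply: eq_bigr => i _; rewrite rmorphB rmorphM /=; ring.
by apply: sumr_ge0 => i _; rewrite mulrC mul_conjC_ge0.
Qed.

Lemma orthonormal_cols I (b : I -> I -> K) :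
  (forall i j, \sum_s (b i s)^* * b j s = (i == j)%:R) ->
  forall p q, \sum_i (b i p)^* * b i q = (p == q)%:R.
Proof.
move=> b_rows p q.
pose Bc : 'M[K]_#|I| := \matrix_(i, s) (b (enum_val i) (enum_val s))^*.
pose Bt : 'M[K]_#|I| := \matrix_(s, j) b (enum_val j) (enum_val s).
have BcBt : Bc *m Bt = 1%:M.
  apply/matrixP => i j; rewrite !mxE.
  under eq_bigr => s _ do rewrite !mxE.
  by rewrite (sum_enum_val (fun s => (b (enum_val i) s)^* * b (enum_val j) s))
             b_rows (inj_eq enum_val_inj).
have /matrixP /(_ (enum_rank q) (enum_rank p)) := mulmx1C BcBt.
rewrite !mxE (inj_eq enum_rank_inj) eq_sym.
under eq_bigr => i _ do rewrite !mxE !enum_rankK.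
rewrite (sum_enum_val (fun i => b i q * (b i p)^*)) => <-.
by apply: eq_bigr => i _; rewrite mulrC.
Qed.

Section Entangled.
Variables (I J : finType) (b : I -> I -> K) (b' : I -> J -> K).
Hypotheses (b_rows : forall i j, \sum_s (b i s)^* * b j s = (i == j)%:R)
           (b'_rows : forall i j, \sum_s (b' i s)^* * b' j s = (i == j)%:R).

Definition entangled p r : K := \sum_i b i p * b' i r.

Lemma entangled_pair (a : I -> K) p :
  \sum_r (entangled p r)^* * \sum_j a j * b' j r = \sum_i (b i p)^* * a i.
Proof.
transitivity (\sum_i \sum_j \sum_r (b i p)^* * a j * ((b' i r)^* * b' j r)).
  rewrite big3_rot; apply: eq_bigr => r _.
  rewrite rmorph_sum mulr_suml; apply: eq_bigr => i _.
  by rewrite mulr_sumr; apply: eq_bigr => j _; rewrite rmorphM /=; ring.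
apply: eq_bigr => i _.
under eq_bigr => j _ do rewrite -mulr_sumr b'_rows.
exact: sum_delta_r.
Qed.

Lemma entangled_contract (y : I -> K) p :
  \sum_r (entangled p r)^* * \sum_j (\sum_q b j q * y q) * b' j r = y p.
Proof.
rewrite entangled_pair.
under eq_bigr => i _ do rewrite mulr_sumr.
rewrite exchange_big /= -(sum_delta_r p y); apply: eq_bigr => q _.
by rewrite -(orthonormal_cols b_rows) mulr_sumr; apply: eq_bigr => i _; ring.
Qed.

Lemma entangled_norm p : \sum_r (entangled p r)^* * entangled p r = 1.
Proof.
have ent_delta r : entangled p r = \sum_j (\sum_q b j q * (p == q)%:R) * b' j r.
  by apply: eq_bigr => j _; rewrite sum_delta_r.
under eq_bigr => r _ do rewrite [X in _ * X]ent_delta.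
by rewrite entangled_contract eqxx.
Qed.

End Entangled.

End HermitianForms.

(** * Assignments to variables *)

Definition splits (X A B : {fset nat}) : Prop :=
  [/\ (A `<=` X)%fset, (B `<=` X)%fset, (A `&` B = fset0)%fset & (X `<=` A `|` B)%fset].

Lemma splits_fsetD (X V : {fset nat}) : (V `<=` X)%fset -> splits X V (X `\` V)%fset.
Proof.
move=> sVX; split; first exact: sVX; first exact: fsubsetDl.
  apply/eqP; rewrite -fsubset0; apply/fsubsetP => x.
  by rewrite in_fsetI in_fsetD => /andP[-> /andP[]].
apply/fsubsetP => x xX; rewrite in_fsetU in_fsetD xX andbT; by case: (x \in V).
Qed.

Lemma splits_fsetU (A B : {fset nat}) : (A `&` B = fset0)%fset -> splits (A `|` B)%fset A B.
Proof. by split; rewrite ?fsubsetUl ?fsubsetUr. Qed.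

Definition join_basis (X A B : {fset nat}) (a : basis A) (b : basis B) : basis X :=
  [ffun x : X => if (insub (val x) : option A) is Some y then a y
                 else if (insub (val x) : option B) is Some y then b y else false].

Arguments join_basis : clear implicits.

Lemma insub_mem (A : {fset nat}) (n : nat) : n \in A ->
  exists y : A, (insub n : option A) = Some y /\ val y = n.
Proof. by move=> nA; rewrite insubT; eexists. Qed.

Section BasisAssignments.
Variables (X : {fset nat}).
Implicit Types (A B U V : {fset nat}) (s t : basis X).

Lemma restr_id s : restr X s = s.
Proof. by apply/ffunP => x; rewrite ffunE valK. Qed.

Lemma restr_restr V U s : (V `<=` U)%fset -> restr V (restr U s) = restr V s.
Proof.
move=> /fsubsetP sVU; apply/ffunP => y; rewrite !ffunE.
have [x [-> vx]] := insub_mem (sVU _ (valP y)).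
by rewrite ffunE vx; case: insubP.
Qed.

Lemma glue_out V (u : basis V) s (x : X) : val x \notin V -> glue u s x = s x.
Proof. by move=> xV; rewrite ffunE insubN. Qed.

Lemma restr_glue V (u : basis V) s : (V `<=` X)%fset -> restr V (glue u s) = u.
Proof.
move=> /fsubsetP sVX; apply/ffunP => y; rewrite !ffunE.
have [x [-> vx]] := insub_mem (sVX _ (valP y)).
by rewrite ffunE vx valK.
Qed.

Lemma glue_restr V s : glue (restr V s) s = s.
Proof. by apply/ffunP => x; rewrite !ffunE; case: insubP => [y _ vy|//]; rewrite ffunE vy valK. Qed.

Lemma glue_glue V (u u' : basis V) s : glue u (glue u' s) = glue u s.
Proof. by apply/ffunP => x; rewrite !ffunE; case: insubP. Qed.

Lemma restr_glue_sub V U (u : basis V) s : (V `<=` U)%fset -> (U `<=` X)%fset ->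
  restr U (glue u s) = glue u (restr U s).
Proof.
move=> /fsubsetP sVU /fsubsetP sUX; apply/ffunP => y; rewrite !ffunE.
have [x [-> vx]] := insub_mem (sUX _ (valP y)).
by rewrite ffunE vx; case: insubP.
Qed.

Lemma restr_join_l A B a b : (A `<=` X)%fset -> restr A (join_basis X A B a b) = a.
Proof.
move=> /fsubsetP sAX; apply/ffunP => y; rewrite !ffunE.
have [x [-> vx]] := insub_mem (sAX _ (valP y)).
by rewrite ffunE vx valK.
Qed.

Lemma restr_join_r A B a b : (B `<=` X)%fset -> (A `&` B = fset0)%fset ->
  restr B (join_basis X A B a b) = b.
Proof.
move=> /fsubsetP sBX dAB; apply/ffunP => y; rewrite !ffunE.
have [x [-> vx]] := insub_mem (sBX _ (valP y)).
rewrite ffunE vx valK insubN //; apply/negP => yA.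
by have := in_fset0 (val y); rewrite -dAB in_fsetI yA (valP y).
Qed.

Lemma join_restr A B s : (X `<=` A `|` B)%fset ->
  join_basis X A B (restr A s) (restr B s) = s.
Proof.
move=> /fsubsetP sX; apply/ffunP => x; rewrite !ffunE.
case: insubP => [y _ vy|xA]; first by rewrite ffunE vy valK.
case: insubP => [y _ vy|xB]; first by rewrite ffunE vy valK.
by have := sX _ (valP x); rewrite in_fsetU (negbTE xA) (negbTE xB).
Qed.

Lemma glue_join V B u p r : glue u (join_basis X V B p r) = join_basis X V B u r.
Proof. by apply/ffunP => x; rewrite !ffunE; case: insubP. Qed.

Lemma sum_join A B (f : basis X -> C) : splits X A B ->
  \sum_s f s = \sum_(a : basis A) \sum_(b : basis B) f (join_basis X A B a b).
Proof.
case=> sAX sBX dAB sX; rewrite pair_big /=.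
pose h (p : basis A * basis B) := join_basis X A B p.1 p.2.
have h_bij : bijective h.
  exists (fun s => (restr A s, restr B s)) => [[a b]|s]; rewrite /h /=.
    by rewrite restr_join_l // restr_join_r.
  by rewrite join_restr.
exact: (@reindex _ _ _ _ _ h xpredT f (onW_bij _ h_bij)).
Qed.

(* [(s, u) |-> (glue u s, restr V s)] is an involution of [basis X * basis V]. *)
Lemma sum_glue V (f : basis X -> basis V -> C) : (V `<=` X)%fset ->
  \sum_s \sum_(u : basis V) f s u = \sum_s \sum_(u : basis V) f (glue u s) (restr V s).
Proof.
move=> sVX; rewrite !pair_big /=.
pose g (p : basis X * basis V) := (glue p.2 p.1, restr V p.1).
have gK : involutive g by move=> [s u]; rewrite /g /= glue_glue glue_restr restr_glue.
exact: (@reindex _ _ _ _ _ g xpredT (fun p => f p.1 p.2) (onW_bij _ (inv_bij gK))).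
Qed.

Lemma sum_glue2 V (f : basis X -> basis X -> basis V -> basis V -> C) :
  (V `<=` X)%fset ->
  \sum_s \sum_t \sum_(u : basis V) \sum_(v : basis V) f s t u v =
  \sum_s \sum_t \sum_(u : basis V) \sum_(v : basis V)
     f (glue v s) (glue u t) (restr V t) (restr V s).
Proof.
move=> sVX.
transitivity (\sum_s \sum_t \sum_(u : basis V) \sum_(v : basis V)
                f s (glue u t) (restr V t) v).
  by apply: eq_bigr => s _; rewrite (sum_glue (fun t u => \sum_v f s t u v)).
transitivity (\sum_s \sum_(v : basis V) \sum_t \sum_(u : basis V)
                f s (glue u t) (restr V t) v).
  apply: eq_bigr => s _.
  by under eq_bigr => t _ do rewrite exchange_big; rewrite exchange_big.
rewrite (sum_glue (fun s v => \sum_t \sum_(u : basis V) f s (glue u t) (restr V t) v)) //.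
apply: eq_bigr => s _.
by rewrite exchange_big; apply: eq_bigr => t _; rewrite exchange_big.
Qed.

Definition agree_out U s t := [forall x : X, (val x \notin U) ==> (s x == t x)].

Lemma agree_out_glue V U (u v : basis V) s t : (V `<=` U)%fset ->
  agree_out U (glue u s) (glue v t) = agree_out U s t.
Proof.
move=> /fsubsetP sVU; apply: eq_forallb => x.
case: (boolP (val x \in U)) => //= xU.
have xV : val x \notin V by apply: contra xU; apply: sVU.
by rewrite !glue_out.
Qed.

Lemma agree_out_restr U s t : (restr U s == restr U t) && agree_out U s t = (s == t).
Proof.
apply/andP/eqP => [[/eqP e /forallP a]|->]; last first.
  by split => //; apply/forallP => x; rewrite eqxx implybT.
apply/ffunP => x; case: (boolP (val x \in U)) => xU; last by have := a x; rewrite xU => /eqP.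
have [y [_ vy]] := insub_mem xU.
by have := congr1 (fun f : basis U => f y) e; rewrite !ffunE vy valK.
Qed.

Lemma agree_out_join A B a b a' b' : (B `<=` X)%fset -> (A `&` B = fset0)%fset ->
  agree_out A (join_basis X A B a b) (join_basis X A B a' b') = (b == b').
Proof.
move=> sBX dAB; apply/idP/eqP => [/forallP agr|<-]; last first.
  by apply/forallP => x; apply/implyP => xA; rewrite !ffunE insubN.
rewrite -(restr_join_r a b sBX dAB) -(restr_join_r a' b' sBX dAB).
apply/ffunP => y; rewrite !ffunE.
case: insubP => [x _ vx|//]; apply/eqP; apply: (implyP (agr x)).
by apply/negP => xA; have := in_fset0 (val x); rewrite -dAB in_fsetI xA vx (valP y).
Qed.

End BasisAssignments.

(** * Super-operators, duality and the Choi form *)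

Lemma optr_opmul (X : {fset nat}) (A B : op X) :
  optr (opmul A B) = \sum_i \sum_k A i k * B k i.
Proof. by []. Qed.

Lemma op_expand (V : {fset nat}) (A : op V) :
  A = fun i j => \sum_(p : basis V * basis V) A p.1 p.2 * opunit p.1 p.2 i j.
Proof.
apply: funext2 => i j.
rewrite -(pair_bigA _ (fun p q => A p q * opunit p q i j)) /= /opunit.
rewrite -[LHS](sum_delta_r i (fun p => A p j)); apply: eq_bigr => p _.
rewrite -(sum_delta_r j (A p)) mulr_suml; apply: eq_bigr => q _.
by rewrite -mulrA -natrM mulnb andbC.
Qed.

Section LinearSuperOperators.
Variables (V : {fset nat}) (E : super V).
Hypothesis linE : linear_super E.

Lemma linear_super0 u v : E (fun _ _ => 0) u v = 0.
Proof.
have := linE 1 (fun _ _ => 0) (fun _ _ => 0) u v.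
have -> : (fun i j : basis V => 1 * (0 : C) + 0) = (fun _ _ => 0).
  by apply: funext2 => i j; rewrite mulr0 addr0.
by rewrite mul1r => /eqP; rewrite addrC -subr_eq subrr eq_sym => /eqP.
Qed.

Lemma linear_super_sum (I : Type) (r : seq I) (a : I -> C) (A : I -> op V) u v :
  E (fun i j => \sum_(k <- r) a k * A k i j) u v = \sum_(k <- r) a k * E (A k) u v.
Proof.
elim: r => [|k r IHr].
  rewrite big_nil -[RHS](linear_super0 u v); congr (E _ u v).
  by apply: funext2 => i j; rewrite big_nil.
rewrite big_cons -IHr -linE; congr (E _ u v).
by apply: funext2 => i j; rewrite big_cons.
Qed.

Lemma linear_super_expand (A : op V) u v :
  E A u v = \sum_p \sum_q A p q * E (opunit p q) u v.
Proof.
rewrite {1}(op_expand A) linear_super_sum.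
by rewrite -(pair_bigA _ (fun p q => A p q * E (opunit p q) u v)).
Qed.

Lemma ext_expand (X : {fset nat}) (rho : op X) s t :
  ext E rho s t = \sum_u \sum_v
     rho (glue u s) (glue v t) * E (opunit u v) (restr V s) (restr V t).
Proof. exact: linear_super_expand. Qed.

Lemma ext_sum (X : {fset nat}) (I : finType) (f : I -> op X) s t :
  ext E (fun a b => \sum_l f l a b) s t = \sum_l ext E (f l) s t.
Proof.
rewrite ext_expand.
under eq_bigr => u _ do under eq_bigr => v _ do rewrite mulr_suml.
by rewrite big3_rot; apply: eq_bigr => l _; rewrite ext_expand.
Qed.

End LinearSuperOperators.

Lemma extopE (W X : {fset nat}) (M : op W) s t :
  @extop W X M s t = M (restr W s) (restr W t) * (agree_out W s t)%:R.
Proof. by []. Qed.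

Lemma trace_extop_ext_adjoint (V U X : {fset nat}) (E : super V) (Z : op U) (rho : op X) :
  linear_super E -> (V `<=` U)%fset -> (U `<=` X)%fset ->
  optr (opmul (@extop U X (ext (adjoint E) Z)) rho) =
  optr (opmul (@extop U X Z) (ext E rho)).
Proof.
move=> linE sVU sUX; have sVX := fsubset_trans sVU sUX.
rewrite !optr_opmul.
under [RHS]eq_bigr => s _ do under eq_bigr => t _ do
  rewrite (ext_expand linE) mulr_sumr.
under [RHS]eq_bigr => s _ do under eq_bigr => t _ do
  under eq_bigr => u _ do rewrite mulr_sumr.
rewrite [RHS](sum_glue2 _ sVX); apply: eq_bigr => s _; apply: eq_bigr => t _.
rewrite extopE /ext /adjoint optr_opmul -mulrA mulr_suml.
apply: eq_bigr => u _; rewrite mulr_suml; apply: eq_bigr => v _.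
rewrite extopE agree_out_glue // !glue_glue !glue_restr !restr_glue //.
by rewrite !(restr_glue_sub _ _ sVU sUX) !(restr_restr _ sVU); ring.
Qed.

(* [choi_form E c] is the quadratic form of the Choi matrix
   [sum_(u,v) |u><v| (x) E(|u><v|)] at the vector [c^*]. *)
Definition choi_form (V : {fset nat}) (E : super V) (c : basis V -> basis V -> C) : C :=
  \sum_u \sum_p \sum_v \sum_q c u p * (c v q)^* * E (opunit u v) p q.

(* The entry [(p, u)] of the partial trace [tr_B |z><w|]. *)
Definition partial_overlap (X V B : {fset nat}) (z w : basis X -> C) (u p : basis V) : C :=
  \sum_(r : basis B) z (join_basis X V B p r) * (w (join_basis X V B u r))^*.

Arguments partial_overlap : clear implicits.

Section ChoiForm.
Variables (V X B : {fset nat}) (E : super V).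
Hypotheses (linE : linear_super E) (splitX : splits X V B).

Lemma trace_ext_rank1 (z w : basis X -> C) :
  \sum_i \sum_k (z i)^* * z k * ext E (fun a b => (w a)^* * w b) k i =
  choi_form E (partial_overlap X V B z w).
Proof.
have [sVX _ _ _] := splitX.
set c := partial_overlap X V B z w.
pose H u p := \sum_i \sum_v (z i)^* * w (glue v i) * E (opunit u v) p (restr V i).
have HE u p : H u p = \sum_v \sum_q (c v q)^* * E (opunit u v) p q.
  rewrite /H (sum_join _ splitX).
  under eq_bigr => q _ do rewrite exchange_big.
  rewrite exchange_big; apply: eq_bigr => v _; apply: eq_bigr => q _.
  rewrite rmorph_sum mulr_suml; apply: eq_bigr => r _.
  by rewrite glue_join restr_join_l // rmorphM /= conjCK.
transitivity (\sum_k \sum_u z k * (w (glue u k))^* * H u (restr V k)).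
  rewrite exchange_big; apply: eq_bigr => k _.
  under eq_bigr => i _ do rewrite (ext_expand linE) mulr_sumr.
  rewrite exchange_big; apply: eq_bigr => u _.
  rewrite /H mulr_sumr; apply: eq_bigr => i _.
  by rewrite !mulr_sumr; apply: eq_bigr => v _; ring.
transitivity (\sum_u \sum_p c u p * H u p).
  rewrite (sum_join _ splitX); under eq_bigr => p _ do rewrite exchange_big.
  rewrite exchange_big; apply: eq_bigr => u _; apply: eq_bigr => p _.
  rewrite /c /partial_overlap mulr_suml; apply: eq_bigr => r _.
  by rewrite glue_join restr_join_l.
apply: eq_bigr => u _; apply: eq_bigr => p _.
by rewrite HE mulr_sumr; apply: eq_bigr => v _; rewrite mulr_sumr; apply: eq_bigr => q _; ring.
Qed.

Lemma trace_ext_gram n1 n2 (zs : 'I_n1 -> basis X -> C) (ws : 'I_n2 -> basis X -> C)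
    (N rho : op X) :
  (forall i k, N i k = \sum_m (zs m i)^* * zs m k) ->
  (forall a b, rho a b = \sum_l (ws l a)^* * ws l b) ->
  optr (opmul N (ext E rho)) =
    \sum_m \sum_l choi_form E (partial_overlap X V B (zs m) (ws l)).
Proof.
move=> Nz rhow.
have -> : rho = fun a b => \sum_l (ws l a)^* * ws l b.
  by apply: funext2.
transitivity (\sum_i \sum_k \sum_m \sum_l
   (zs m i)^* * zs m k * ext E (fun a b => (ws l a)^* * ws l b) k i).
  apply: eq_bigr => i _; apply: eq_bigr => k _.
  rewrite Nz (ext_sum linE) mulr_suml; apply: eq_bigr => m _.
  exact: mulr_sumr.
rewrite big3_rot; apply: eq_bigr => m _.
by rewrite big3_rot; apply: eq_bigr => l _; apply: trace_ext_rank1.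
Qed.

End ChoiForm.

(* Both operators are sums of rank-one terms (Gram decompositions), and on
   rank-one terms the trace is a value of the Choi form. *)
Lemma le_trace_ext_of_choi (V X : {fset nat}) (E F : super V) :
  linear_super E -> linear_super F -> (V `<=` X)%fset ->
  (forall c, choi_form E c <= choi_form F c) ->
  forall N rho : op X, psd N -> psd rho ->
  optr (opmul N (ext E rho)) <= optr (opmul N (ext F rho)).
Proof.
move=> linE linF sVX choiEF N rho /psdq_gram[zs Nz] /psdq_gram[ws rhow].
have splitX := splits_fsetD sVX.
rewrite (trace_ext_gram linE splitX Nz rhow) (trace_ext_gram linF splitX Nz rhow).
by apply: ler_sum => m _; apply: ler_sum => l _; apply: choiEF.
Qed.

Section Blocks.
Variables (X V B : {fset nat}).
Hypothesis splitX : splits X V B.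

Definition block (rho : op X) (r : basis B) : op V :=
  fun u v => rho (join_basis X V B u r) (join_basis X V B v r).

Lemma psd_block (rho : op X) r : psd rho -> psd (block rho r).
Proof.
have [sVX sBX dVB _] := splitX.
move=> psd_rho x; pose y (s : basis X) := (restr B s == r)%:R * x (restr V s).
have := psd_rho y; congr (0 <= _).
rewrite (sum_join _ splitX); apply: eq_bigr => u _.
transitivity (\sum_(r1 : basis B) (r1 == r)%:R * \sum_v \sum_(r2 : basis B)
   (x u)^* * rho (join_basis X V B u r1) (join_basis X V B v r2) * x v * (r == r2)%:R).
  apply: eq_bigr => r1 _; rewrite (sum_join _ splitX) mulr_sumr; apply: eq_bigr => v _.
  rewrite mulr_sumr; apply: eq_bigr => r2 _.
  rewrite /y !restr_join_l // !restr_join_r // conjCM conjC_nat [r2 == r]eq_sym; ring.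
rewrite sum_delta_l; apply: eq_bigr => v _.
by rewrite sum_delta_r.
Qed.

Lemma optr_block (rho : op X) : optr rho = \sum_(r : basis B) optr (block rho r).
Proof. by rewrite /optr (sum_join _ splitX) exchange_big. Qed.

End Blocks.

Lemma optr_ext_le (V X : {fset nat}) (E : super V) (rho : op X) :
  (forall sigma : op V, psd sigma -> optr (E sigma) <= optr sigma) ->
  (V `<=` X)%fset -> psd rho -> optr (ext E rho) <= optr rho.
Proof.
move=> trE sVX psd_rho; have splitX := splits_fsetD sVX.
have -> : optr (ext E rho) = \sum_(r : basis (X `\` V)%fset) optr (E (block rho r)).
  rewrite /optr (sum_join _ splitX) exchange_big; apply: eq_bigr => r _.
  apply: eq_bigr => p _; rewrite /ext restr_join_l //; congr (E _ p p).
  by apply: funext2 => u v; rewrite !glue_join.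
by rewrite (optr_block splitX); apply: ler_sum => r _; apply/trE/(psd_block splitX).
Qed.

Lemma psd_extop (W X : {fset nat}) (N : op W) :
  (W `<=` X)%fset -> psd N -> psd (@extop W X N).
Proof.
move=> sWX psdN x; have splitX := splits_fsetD sWX.
have [_ sBX dWB _] := splitX; set B := (X `\` W)%fset in splitX sBX dWB *.
change (0 <= qform (@extop W X N) x).
suff -> : qform (@extop W X N) x =
          \sum_(b : basis B) qform N (fun a => x (join_basis X W B a b)).
  by apply: sumr_ge0 => b _; apply: psdN.
rewrite /qform (sum_join _ splitX) exchange_big; apply: eq_bigr => b _.
apply: eq_bigr => a _; rewrite (sum_join _ splitX); apply: eq_bigr => a' _.
under eq_bigr => b' _ do rewrite extopE !restr_join_l // agree_out_join //.
rewrite -[RHS](sum_delta_r b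
  (fun b' => (x (join_basis X W B a b))^* * N a a' * x (join_basis X W B a' b'))).
by apply: eq_bigr => b' _; ring.
Qed.

Lemma extop_id (U : {fset nat}) (M : op U) : @extop U U M = M.
Proof.
apply: funext2 => s t.
rewrite extopE !restr_id.
have -> : agree_out U s t by apply/forallP => x; rewrite (valP x).
by rewrite mulr1.
Qed.

Lemma extop_1_sub (W X : {fset nat}) (N : op W) :
  @extop W X (opsub (@opone W) N) = opsub (@opone X) (@extop W X N).
Proof.
apply: funext2 => s t.
by rewrite /opsub /opone !extopE mulrBl -natrM mulnb agree_out_restr.
Qed.

Lemma opsub_1_subK (X : {fset nat}) (A : op X) :
  opsub (@opone X) (opsub (@opone X) A) = A.
Proof.
apply: funext2 => s t.
by rewrite /opsub opprB addrC subrK.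
Qed.

Lemma optr_opmul_1_sub (X : {fset nat}) (A P : op X) :
  optr (opmul (opsub (@opone X) A) P) = optr P - optr (opmul A P).
Proof.
rewrite !optr_opmul -sumrB; apply: eq_bigr => i _.
under eq_bigr => k _ do rewrite /opsub mulrBl.
rewrite sumrB; congr (_ - _).
by under eq_bigr => k _ do rewrite /opone eq_sym; rewrite sum_delta_l.
Qed.

Lemma sat_par_leE (V W X : {fset nat}) (E : super V) (M N : op W) (rho : op X) :
  (optr (opmul (@extop W X M) rho) <=
     optr (opmul (@extop W X N) (ext E rho)) + optr rho - optr (ext E rho)) =
  (optr (opmul (@extop W X (opsub (@opone W) N)) (ext E rho)) <=
     optr (opmul (@extop W X (opsub (@opone W) M)) rho)).
Proof.
rewrite !extop_1_sub !optr_opmul_1_sub -subr_ge0 -[RHS]subr_ge0.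
by congr (0 <= _); ring.
Qed.

(** * The maximally entangled state *)

Lemma card_basis (V : {fset nat}) : #|{: basis V}| = (2 ^ #|` V|)%N.
Proof.
by rewrite card_ffun card_bool -(card_fsub (fsubset_refl V)) fsubT cardsT.
Qed.

Lemma choi_form_scale (V : {fset nat}) (E : super V) c (a : C) :
  choi_form E (fun u p => a * c u p) = a * a^* * choi_form E c.
Proof.
rewrite /choi_form !mulr_sumr; apply: eq_bigr => u _; rewrite mulr_sumr.
apply: eq_bigr => p _; rewrite mulr_sumr; apply: eq_bigr => v _; rewrite mulr_sumr.
by apply: eq_bigr => q _; rewrite conjCM; ring.
Qed.

Section MaximallyEntangled.
Variables (V V' : {fset nat}) (bV : basis V -> basis V -> C) (bV' : basis V -> basis V' -> C).
Hypotheses (dVV' : (V `&` V' = fset0)%fset) (bV_on : orthonormal_basis bV)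
  (bV'_on : orthonormal_basis bV').

Let U := (V `|` V')%fset.
Let splitU : splits U V V' := splits_fsetU dVV'.
Let d : C := (2 ^ #|` V|)%N%:R.

Lemma sqrt_dim_gt0 : 0 < sqrtC d.
Proof. by rewrite sqrtC_gt0 ltr0n expn_gt0. Qed.

Lemma omega_join p r : omega bV bV' (join_basis U V V' p r) =
  (sqrtC d)^-1 * entangled bV bV' p r.
Proof. by rewrite /omega restr_join_l ?fsubsetUl // restr_join_r ?fsubsetUr. Qed.

Lemma conj_inv_sqrt_dim : ((sqrtC d)^-1)^* = (sqrtC d)^-1.
Proof. by apply/conj_Creal; rewrite rpredV; apply/gtr0_real/sqrt_dim_gt0. Qed.

Lemma omega_norm : \sum_s omega bV bV' s * (omega bV bV' s)^* = 1.
Proof.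
rewrite (sum_join _ splitU).
transitivity ((sqrtC d)^-1 * (sqrtC d)^-1 *
              \sum_(p : basis V) \sum_r (entangled bV bV' p r)^* * entangled bV bV' p r).
  rewrite mulr_sumr; apply: eq_bigr => p _; rewrite mulr_sumr; apply: eq_bigr => r _.
  by rewrite omega_join conjCM conj_inv_sqrt_dim; ring.
under eq_bigr => p _ do rewrite entangled_norm //.
rewrite sumr_const card_basis -invfM -expr2 sqrtCK.
by rewrite mulVf // pnatr_eq0 expn_eq0.
Qed.

Lemma psd_Omega : psd (Omega bV bV').
Proof. exact: psdq_outer. Qed.

Lemma psd_1_sub_Omega : psd (opsub (@opone U) (Omega bV bV')).
Proof. exact: psdq_1_sub_outer omega_norm. Qed.

Lemma effect_Omega : effect (Omega bV bV').
Proof. by split; [exact: psd_Omega | exact: psd_1_sub_Omega]. Qed.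

Let zeta (s : basis U) := (omega bV bV' s)^*.

Lemma trace_Omega_ext_rank1 (E : super V) (w : basis U -> C) : linear_super E ->
  optr (opmul (Omega bV bV') (ext E (fun a b => (w a)^* * w b))) =
  choi_form E (partial_overlap U V V' zeta w).
Proof.
move=> linE; rewrite -(trace_ext_rank1 linE splitU) optr_opmul.
by apply: eq_bigr => i _; apply: eq_bigr => k _; rewrite /zeta conjCK.
Qed.

Lemma partial_overlap_zeta_onto c : exists w, partial_overlap U V V' zeta w = c.
Proof.
pose y (s : basis U) := \sum_j (\sum_q bV j q * c (restr V s) q) * bV' j (restr V' s).
exists (fun s => (sqrtC d * y s)^*).
apply: funext2 => u p.
rewrite -[RHS](entangled_contract bV_on bV'_on (c u)).
apply: eq_bigr => r _; rewrite /zeta /y conjCK omega_join conjCM conj_inv_sqrt_dim.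
rewrite restr_join_l ?fsubsetUl // restr_join_r ?fsubsetUr //.
by rewrite mulrACA mulVf ?mul1r // gt_eqF // sqrt_dim_gt0.
Qed.

(* Every [c] is the partial overlap of [omega^*] with some [w]; normalising
   [w] to a state only rescales the Choi form by a positive factor. *)
Lemma choi_form_le_of_Omega (E1 E2 : super V) :
  linear_super E1 -> linear_super E2 ->
  (forall rho : op U, pdo rho ->
     optr (opmul (Omega bV bV') (ext E1 rho)) <= optr (opmul (Omega bV bV') (ext E2 rho))) ->
  forall c, choi_form E1 c <= choi_form E2 c.
Proof.
move=> linE1 linE2 Omega_le c; have [w wc] := partial_overlap_zeta_onto c.
pose T := \sum_a (w a)^* * w a.
have T_ge0 : 0 <= T by apply: sumr_ge0 => a _; rewrite mulrC mul_conjC_ge0.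
have T1_gt0 : 0 < 1 + T by rewrite ltr_wpDr.
pose s := sqrtC (1 + T)^-1.
have s_real : s^* = s by apply/conj_Creal/sqrtC_real; rewrite invr_ge0 ltW.
have ss : s * s^* = (1 + T)^-1 by rewrite s_real -expr2 sqrtCK.
pose rho a b := (s * w a)^* * (s * w b).
have rho_pdo : pdo rho.
  split; first exact: (psdq_rank1 (fun a => s * w a)).
  have -> : optr rho = (1 + T)^-1 * T.
    by rewrite /optr /T mulr_sumr; apply: eq_bigr => a _; rewrite /rho conjCM -ss; ring.
  by rewrite ler_pdivrMl // mulr1 lerDr.
have := Omega_le rho rho_pdo; rewrite !trace_Omega_ext_rank1 //.
have -> : partial_overlap U V V' zeta (fun a => s * w a) = fun u p => s * c u p.
  rewrite -wc; apply: funext2 => u p.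
  by rewrite mulr_sumr; apply: eq_bigr => r _; rewrite conjCM s_real; ring.
by rewrite !choi_form_scale ss ler_pM2l ?invr_gt0.
Qed.

End MaximallyEntangled.

(** * Refinement *)

Lemma effect_1_sub (X : {fset nat}) (M : op X) : effect M -> effect (opsub (@opone X) M).
Proof. by case=> psdM psd1M; split; rewrite ?opsub_1_subK. Qed.

Lemma refT_of_choi_form_le (V : {fset nat}) (E F : super V) :
  linear_super E -> linear_super F ->
  (forall c, choi_form E c <= choi_form F c) -> refT E F.
Proof.
move=> linE linF choiEF W M N _ [psdN _] satE X sX rho rho_pdo.
move: sX; rewrite fsubUset => /andP[sVX sWX].
apply: le_trans (satE X _ rho rho_pdo) _; first by rewrite fsubUset sVX.
by apply: le_trace_ext_of_choi => //; [apply: psd_extop | case: rho_pdo].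
Qed.

Lemma refP_of_choi_form_ge (V : {fset nat}) (E F : super V) :
  linear_super E -> linear_super F ->
  (forall c, choi_form F c <= choi_form E c) -> refP E F.
Proof.
move=> linE linF choiFE W M N _ effN satE X sX rho rho_pdo.
have := satE X sX rho rho_pdo; rewrite !sat_par_leE; apply: le_trans.
move: sX; rewrite fsubUset => /andP[sVX sWX]; have [psd1N _] := effect_1_sub effN.
by apply: le_trace_ext_of_choi => //; [apply: psd_extop | case: rho_pdo].
Qed.

Section AdjointOmega.
Variables (V V' : {fset nat}) (bV : basis V -> basis V -> C) (bV' : basis V -> basis V' -> C)
  (E : super V).
Hypotheses (dVV' : (V `&` V' = fset0)%fset) (bV_on : orthonormal_basis bV)
  (bV'_on : orthonormal_basis bV') (E_prog : DProg E).

Let U := (V `|` V')%fset.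
Let sVU : (V `<=` U)%fset := fsubsetUl V V'.
Let Y := ext (adjoint E) (Omega bV bV').

Lemma optr_ext_adjoint_Omega rho : optr (opmul Y rho) = optr (opmul (Omega bV bV') (ext E rho)).
Proof.
have [linE _ _] := E_prog.
by rewrite -(extop_id Y) (trace_extop_ext_adjoint _ _ linE sVU (fsubset_refl U)) extop_id.
Qed.

Lemma qform_ext_adjoint_Omega (x : basis U -> C) :
  qform Y x = optr (opmul (Omega bV bV') (ext E (fun a b => x a * (x b)^*))).
Proof. by rewrite qform_trace -optr_ext_adjoint_Omega. Qed.

Lemma effect_ext_adjoint_Omega : effect Y.
Proof.
have [_ cpE trE] := E_prog.
have psd_ext x := cpE U sVU _ (psdq_outer x).
split=> x; rewrite -/(qform _ x).
  by rewrite qform_ext_adjoint_Omega; apply: trace_mul_psdq_ge0 (psd_Omega _ _) (psd_ext x).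
rewrite qform_1_sub qform_ext_adjoint_Omega subr_ge0.
have -> : \sum_i (x i)^* * x i = optr (fun a b => x a * (x b)^*).
  by apply: eq_bigr => i _; rewrite mulrC.
apply: le_trans _ (optr_ext_le trE sVU (psdq_outer x)).
rewrite -subr_ge0 -optr_opmul_1_sub.
exact: trace_mul_psdq_ge0 (psd_1_sub_Omega dVV' bV_on bV'_on) (psd_ext x).
Qed.

Lemma sat_tot_ext_adjoint_Omega : sat_tot E Y (Omega bV bV').
Proof.
have [linE _ _] := E_prog.
move=> X; rewrite fsubUset => /andP[_ sUX] rho _.
by rewrite (trace_extop_ext_adjoint _ _ linE sVU sUX).
Qed.

Lemma sat_par_ext_adjoint_Omega :
  sat_par E (opsub (@opone U) Y) (opsub (@opone U) (Omega bV bV')).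
Proof.
have [linE _ _] := E_prog.
move=> X; rewrite fsubUset => /andP[_ sUX] rho _.
by rewrite sat_par_leE !opsub_1_subK (trace_extop_ext_adjoint _ _ linE sVU sUX).
Qed.

Lemma Omega_le_of_sat_tot (F : super V) : sat_tot F Y (Omega bV bV') ->
  forall rho : op U, pdo rho ->
  optr (opmul (Omega bV bV') (ext E rho)) <= optr (opmul (Omega bV bV') (ext F rho)).
Proof.
move=> satF rho rho_pdo; rewrite -optr_ext_adjoint_Omega -[Y]extop_id -[Omega _ _](extop_id).
by apply: satF rho_pdo; rewrite fsubUset sVU fsubset_refl.
Qed.

Lemma Omega_ge_of_sat_par (F : super V) :
  sat_par F (opsub (@opone U) Y) (opsub (@opone U) (Omega bV bV')) ->
  forall rho : op U, pdo rho ->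
  optr (opmul (Omega bV bV') (ext F rho)) <= optr (opmul (Omega bV bV') (ext E rho)).
Proof.
move=> satF rho rho_pdo; rewrite -optr_ext_adjoint_Omega.
have := satF U _ rho rho_pdo; rewrite sat_par_leE !opsub_1_subK !extop_id.
by apply; rewrite fsubUset sVU fsubset_refl.
Qed.

End AdjointOmega.

Theorem theorem4p3 (V V' : {fset nat}) (E F : super V)
    (bV : basis V -> basis V -> C) (bV' : basis V -> basis V' -> C) :
  DProg E -> DProg F ->
  #|` V'| = #|` V| -> (V `&` V' = fset0)%fset ->
  orthonormal_basis bV -> orthonormal_basis bV' ->
  (refT E F <->
     sat_tot F (ext (adjoint E) (Omega bV bV')) (Omega bV bV')) /\
  (refP E F <->
     sat_par F (opsub (@opone (V `|` V')%fset) (ext (adjoint E) (Omega bV bV')))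
               (opsub (@opone (V `|` V')%fset) (Omega bV bV'))).
Proof.
(* The cardinality hypothesis is subsumed by the orthonormality of [bV'],
   whose vectors are indexed by [basis V]. *)
move=> E_prog F_prog _ dVV' bV_on bV'_on.
have [linE _ _] := E_prog; have [linF _ _] := F_prog.
have effY := effect_ext_adjoint_Omega dVV' bV_on bV'_on E_prog.
have effO := effect_Omega dVV' bV_on bV'_on.
split; split.
- by move=> refEF; apply: refEF effY effO (sat_tot_ext_adjoint_Omega _ _ E_prog).
- move=> satF; apply: refT_of_choi_form_le => //.
  exact: choi_form_le_of_Omega (Omega_le_of_sat_tot E_prog satF).
- move=> refEF; apply: refEF (effect_1_sub effY) (effect_1_sub effO) _.
  exact: sat_par_ext_adjoint_Omega.
- move=> satF; apply: refP_of_choi_form_ge => //.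
  exact: choi_form_le_of_Omega (Omega_ge_of_sat_par E_prog satF).
Qed.
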